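(* Let $L_0$ be shared between frames $\mathcal{F}_1,\mathcal{F}_2$. Let $\mathcal{B}_{lc}\in\mathrm{lruns}_{\mathrm{LEFT}_0\cup C_{cut,0}}(\mathcal{F}_1)$ and $\mathcal{B}_{rc}\in\mathrm{lruns}_{\mathrm{RIGHT}_2\cup C_{cut,0}}(\mathcal{F}_2)$ satisfy $\mathcal{B}_{lc}|_{C_{cut,0}}=\mathcal{B}_{rc}|_{C_{cut,0}}$. Then there is an $\mathcal{A}\in\mathrm{exec}(\mathcal{F}_2)$ such that $\mathcal{B}_{lc}=\mathcal{A}|_{\mathrm{LEFT}_0\cup C_{cut,0}}$ and $\mathcal{B}_{rc}=\mathcal{A}|_{\mathrm{RIGHT}_2\cup C_{cut,0}}$.
   Context: A frame consists of pairwise disjoint sets of locations $\mathcal{LO}$, channels $\mathcal{CH}$, data $\mathcal{D}$. Each channel $c$ either has both a sender $\mathrm{sender}(c)$ and a recipient $\mathrm{recipient}(c)$ (possibly equal), or neither; $\mathrm{chans}(\ell)$ is the set of channels of which $\ell$ is sender or recipient. Each location $\ell$ has a prefix-closed set $\mathrm{traces}(\ell)$ of finite or infinite sequences of labels $(c,v)$, $c\in\mathrm{chans}(\ell)$, $v\in\mathcal{D}$. Events are drawn from a common set $E$ with functions $\mathrm{chan}$ and $\mathrm{msg}$. A system of events $(B,\preceq)$ has $B\subseteq E$ and $\preceq$ a partial order with finitely many predecessors per event; it is an execution of frame $\mathcal{F}_i$ ($\in\mathrm{exec}(\mathcal{F}_i)$) iff for each location $\ell$ of $\mathcal{F}_i$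 the events whose channel has $\ell$ as sender or recipient are linearly ordered and, as a sequence of labels $(\mathrm{chan}(e),\mathrm{msg}(e))$, lie in $\mathrm{traces}(\ell)$. $\mathcal{B}|_C$ keeps events with channel in $C$ and the restricted order; $\mathrm{lruns}_C(\mathcal{F}_i)=\{\mathcal{A}|_C:\mathcal{A}\in\mathrm{exec}(\mathcal{F}_i)\}$. A set $L_0$ of locations is shared between $\mathcal{F}_1$ and $\mathcal{F}_2$ (with locations $\mathcal{LO}_i$, channels $\mathcal{CH}_i$) iff $L_0\subseteq\mathcal{LO}_1\cap\mathcal{LO}_2$ and each $\ell\in L_0$ has the same channel endpoints and the same trace set in both frames. Then $\mathrm{LEFT}_0=\{c\in\mathcal{CH}_1:$ both endpoints of $c$ are in $L_0\}$, $C_{cut,0}=\{c\in\mathcal{CH}_1:$ exactly one endpoint of $c$ is in $L_0\}$, and $\mathrm{RIGHT}_2=\{c\in\mathcal{CH}_2:$ no endpoint of $c$ is in $L_0\}$. *)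

From Stdlib Require Import List Arith PeanoNat.
Set Implicit Arguments.

Section Frames.
Variables (LO CH D : Type).

(* A finite or infinite sequence of labels: a function nat -> option label
   that, once undefined, stays undefined (the domain is an initial segment). *)
Definition label := (CH * D)%type.
Definition lseq := nat -> option label.
Definition wf_seq {A : Type} (s : nat -> option A) : Prop :=
  forall n, s n = None -> s (S n) = None.
Definition trunc {A : Type} (n : nat) (s : nat -> option A) : nat -> option A :=
  fun k => if k <? n then s k else None.

Record frame := Frame {
  f_loc : LO -> Prop;
  f_chan : CH -> Prop;
  f_ends : CH -> option (LO * LO);            (* Some (sender, recipient), or neither *)
  f_ends_ok : forall c s r, f_chan c -> f_ends c = Some (s, r) -> f_loc s /\ f_loc r;
  f_traces : LO -> lseq -> Prop;
  f_traces_wf : forall l s, f_traces l s -> wf_seq s;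
  f_traces_prefix : forall l s n, f_traces l s -> f_traces l (trunc n s);
  f_traces_lab : forall l s n c v, f_traces l s -> s n = Some (c, v) ->
      f_chan c /\ exists a b, f_ends c = Some (a, b) /\ (a = l \/ b = l)
}.

Definition chans (F : frame) (l : LO) (c : CH) : Prop :=
  f_chan F c /\ exists a b, f_ends F c = Some (a, b) /\ (a = l \/ b = l).

Definition shared (F1 F2 : frame) (L0 : LO -> Prop) : Prop :=
  forall l, L0 l ->
    f_loc F1 l /\ f_loc F2 l /\
    (forall c, chans F1 l c <-> chans F2 l c) /\
    (forall c, chans F1 l c -> f_ends F1 c = f_ends F2 c) /\
    (forall s, f_traces F1 l s <-> f_traces F2 l s).

Definition LEFT0 (F1 : frame) (L0 : LO -> Prop) (c : CH) : Prop :=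
  f_chan F1 c /\ exists a b, f_ends F1 c = Some (a, b) /\ L0 a /\ L0 b.
Definition Ccut0 (F1 : frame) (L0 : LO -> Prop) (c : CH) : Prop :=
  f_chan F1 c /\ exists a b, f_ends F1 c = Some (a, b) /\
     ((L0 a /\ ~ L0 b) \/ (~ L0 a /\ L0 b)).
Definition RIGHT2 (F2 : frame) (L0 : LO -> Prop) (c : CH) : Prop :=
  f_chan F2 c /\ forall a b, f_ends F2 c = Some (a, b) -> ~ L0 a /\ ~ L0 b.

Definition setU {A : Type} (P Q : A -> Prop) : A -> Prop := fun x => P x \/ Q x.

Variables (E : Type) (chan : E -> CH) (msg : E -> D).

Record sys := Sys { s_ev : E -> Prop; s_le : E -> E -> Prop }.

Definition is_sys (B : sys) : Prop :=
  (forall x y, s_le B x y -> s_ev B x /\ s_ev B y) /\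
  (forall x, s_ev B x -> s_le B x x) /\
  (forall x y, s_le B x y -> s_le B y x -> x = y) /\
  (forall x y z, s_le B x y -> s_le B y z -> s_le B x z) /\
  (forall e, s_ev B e -> exists l : list E, forall x, s_le B x e -> In x l).

Definition sys_eq (B1 B2 : sys) : Prop :=
  (forall e, s_ev B1 e <-> s_ev B2 e) /\
  (forall x y, s_le B1 x y <-> s_le B2 x y).

Definition enumerates (S : E -> Prop) (le : E -> E -> Prop) (s : nat -> option E) : Prop :=
  wf_seq s /\
  (forall n e, s n = Some e -> S e) /\
  (forall e, S e -> exists n, s n = Some e) /\
  (forall m n e f, s m = Some e -> s n = Some f -> (le e f <-> m <= n)).

Definition labels (s : nat -> option E) : lseq :=
  fun n => option_map (fun e => (chan e, msg e)) (s n).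

Definition is_exec (F : frame) (B : sys) : Prop :=
  is_sys B /\
  forall l, f_loc F l ->
    exists s, enumerates (fun e => s_ev B e /\ chans F l (chan e)) (s_le B) s /\
              f_traces F l (labels s).

Definition restrict (B : sys) (C : CH -> Prop) : sys :=
  Sys (fun e => s_ev B e /\ C (chan e))
      (fun x y => s_le B x y /\ C (chan x) /\ C (chan y)).

Definition in_lruns (C : CH -> Prop) (F : frame) (B : sys) : Prop :=
  exists A, is_exec F A /\ sys_eq B (restrict A C).

End Frames.

(* Let A1 and A2 be executions of F1 and F2 inducing Blc and Brc. Glue their restrictions
   to the left and to the right channels: take the union of the events and the order
   generated by the two orders. Both restrictions coincide on the cut channels, and any
   comparison between a left and a right event passes through a cut event, so the generated
   relation is a partial order which restricts back to each side. A location of L0 only uses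
   left channels and has the same traces in both frames; every other location of F2 only
   uses right channels. Hence each location of F2 sees exactly what it saw in A1 or in A2. *)
From Stdlib Require Import List Classical Setoid Morphisms.
Set Implicit Arguments.

Section Systems.
Variable E : Type.

Lemma sys_eq_refl (B : sys E) : sys_eq B B.
Proof. split; reflexivity. Qed.

Lemma sys_eq_sym (B B' : sys E) : sys_eq B B' -> sys_eq B' B.
Proof. intros [Hev Hle]; split; symmetry; auto. Qed.

Lemma sys_eq_trans (B B' B'' : sys E) : sys_eq B B' -> sys_eq B' B'' -> sys_eq B B''.
Proof. intros [Hev Hle] [Kev Kle]; split; intros; [rewrite Hev | rewrite Hle]; auto. Qed.

Definition fin_preds (R : E -> E -> Prop) : Prop :=
  forall e, exists l : list E, forall x, R x e -> In x l.

Section IsSys.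
Variable B : sys E.
Hypothesis HB : is_sys B.

Lemma sys_le_ev {x y} : s_le B x y -> s_ev B x /\ s_ev B y.
Proof. apply HB. Qed.

Lemma sys_le_refl {x} : s_ev B x -> s_le B x x.
Proof. apply HB. Qed.

Lemma sys_le_anti {x y} : s_le B x y -> s_le B y x -> x = y.
Proof. apply HB. Qed.

Lemma sys_le_trans {x y z} : s_le B x y -> s_le B y z -> s_le B x z.
Proof. apply HB. Qed.

Lemma sys_fin_preds : fin_preds (s_le B).
Proof.
  intros e. destruct (classic (s_ev B e)) as [He | He].
  - apply HB, He.
  - exists nil; intros x Hx. apply He, (sys_le_ev Hx).
Qed.
End IsSys.

Lemma fin_preds_union (R S : E -> E -> Prop) :
  fin_preds R -> fin_preds S -> fin_preds (fun x y => R x y \/ S x y).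
Proof.
  intros HR HS e. destruct (HR e) as [l Hl], (HS e) as [m Hm].
  exists (l ++ m); intros x [Hx | Hx]; apply in_or_app; auto.
Qed.

Lemma fin_preds_comp (R S : E -> E -> Prop) :
  fin_preds R -> fin_preds S -> fin_preds (fun x y => exists c, R x c /\ S c y).
Proof.
  intros HR HS e.
  assert (Hpreds : forall m : list E, exists l, forall c x, In c m -> R x c -> In x l).
  { intros m; induction m as [| c m [l IH]].
    - exists nil; intros c x [].
    - destruct (HR c) as [lc Hc]. exists (lc ++ l).
      intros c' x [<- | Hc'] Hx; apply in_or_app; eauto. }
  destruct (HS e) as [m Hm], (Hpreds m) as [l Hl]. exists l; intros x [c [Hxc Hce]]. eauto.
Qed.
End Systems.

Add Parametric Relation (E : Type) : (sys E) (@sys_eq E)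
  reflexivity proved by (@sys_eq_refl E)
  symmetry proved by (@sys_eq_sym E)
  transitivity proved by (@sys_eq_trans E) as sys_eq_rel.

Add Parametric Morphism (E CH : Type) (chan : E -> CH) : (restrict chan)
  with signature (@sys_eq E) ==> pointwise_relation CH iff ==> (@sys_eq E)
  as restrict_proper.
Proof.
  intros B B' [Hev Hle] C C' HC. split; simpl; intros; rewrite ?Hev, ?Hle, ?HC; reflexivity.
Qed.

Section Restriction.
Variables (E CH : Type) (chan : E -> CH).

Lemma restrict_restrict (B : sys E) (C C' : CH -> Prop) :
  sys_eq (restrict chan (restrict chan B C) C') (restrict chan B (fun c => C c /\ C' c)).
Proof. split; simpl; intros; tauto. Qed.

Lemma is_sys_restrict (B : sys E) (C : CH -> Prop) : is_sys B -> is_sys (restrict chan B C).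
Proof.
  intros HB. split; [| split; [| split; [| split]]]; simpl.
  - intros x y [Hxy [Hx Hy]]. destruct (sys_le_ev HB Hxy); tauto.
  - intros x [Hx HC]. auto using sys_le_refl.
  - intros x y [Hxy _] [Hyx _]. eauto using sys_le_anti.
  - intros x y z [Hxy [Hx _]] [Hyz [_ Hz]]. eauto using sys_le_trans.
  - intros e _. destruct (sys_fin_preds HB e) as [l Hl]. exists l; intros x [Hx _]; auto.
Qed.

Lemma enumerates_restrict (B B' : sys E) (C C' : CH -> Prop) s :
  sys_eq (restrict chan B C) (restrict chan B' C') ->
  enumerates (s_ev (restrict chan B C)) (s_le B) s ->
  enumerates (s_ev (restrict chan B' C')) (s_le B') s.
Proof.
  intros [Hev Hle] [Hwf [Hin [Hall Hord]]]. split; [exact Hwf | split; [| split]].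
  - intros n e Hn. apply Hev; eauto.
  - intros e He. apply Hall, Hev, He.
  - intros m n e f Hm Hn.
    destruct (Hin _ _ Hm) as [He HCe], (Hin _ _ Hn) as [Hf HCf].
    destruct (proj1 (Hev e) (conj He HCe)) as [_ HCe'], (proj1 (Hev f) (conj Hf HCf)) as [_ HCf'].
    rewrite <- (Hord _ _ _ _ Hm Hn). specialize (Hle e f); simpl in Hle. tauto.
Qed.
End Restriction.

Section Compatible.
Variables (E CH : Type) (chan : E -> CH).

Definition compatible (K1 K2 : CH -> Prop) (B1 B2 : sys E) : Prop :=
  is_sys B1 /\ is_sys B2 /\
  (forall e, s_ev B1 e -> K1 (chan e)) /\ (forall e, s_ev B2 e -> K2 (chan e)) /\
  sys_eq (restrict chan B1 K2) (restrict chan B2 K1).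

Lemma compatible_sym K1 K2 B1 B2 : compatible K1 K2 B1 B2 -> compatible K2 K1 B2 B1.
Proof.
  intros (HB1 & HB2 & On1 & On2 & Hagree).
  exact (conj HB2 (conj HB1 (conj On2 (conj On1 (sys_eq_sym Hagree))))).
Qed.

(* For compatible systems one alternation between the two orders suffices for
   transitivity: every link between the two sides passes through a common event. *)
Definition glue (B1 B2 : sys E) : sys E :=
  Sys (fun e => s_ev B1 e \/ s_ev B2 e)
      (fun x y => s_le B1 x y \/ s_le B2 x y \/
                  (exists c, s_le B1 x c /\ s_le B2 c y) \/ (exists c, s_le B2 x c /\ s_le B1 c y)).

Lemma glue_comm B1 B2 : sys_eq (glue B1 B2) (glue B2 B1).
Proof. split; simpl; intros; tauto. Qed.

Lemma glue_le_comm B1 B2 x y : s_le (glue B1 B2) x y -> s_le (glue B2 B1) x y.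
Proof. simpl; tauto. Qed.

Lemma glue_le_ev B1 B2 x y :
  is_sys B1 -> is_sys B2 -> s_le (glue B1 B2) x y -> s_ev (glue B1 B2) x /\ s_ev (glue B1 B2) y.
Proof.
  intros HB1 HB2; simpl.
  intros [H | [H | [[c [H H']] | [c [H H']]]]];
  repeat match goal with
  | H : s_le B1 _ _ |- _ => apply (sys_le_ev HB1) in H
  | H : s_le B2 _ _ |- _ => apply (sys_le_ev HB2) in H
  end; tauto.
Qed.

Lemma glue_fin_preds B1 B2 : is_sys B1 -> is_sys B2 -> fin_preds (s_le (glue B1 B2)).
Proof.
  intros HB1 HB2. pose proof (sys_fin_preds HB1). pose proof (sys_fin_preds HB2).
  repeat apply fin_preds_union; auto; apply fin_preds_comp; auto.
Qed.

Section OneSide.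
Variables (K1 K2 : CH -> Prop) (B1 B2 : sys E).
Hypothesis HB : compatible K1 K2 B1 B2.

Lemma compatible_ev {x} : s_ev B2 x -> K1 (chan x) -> s_ev B1 x.
Proof.
  destruct HB as (_ & _ & _ & _ & Hev & _). intros Hx HK.
  apply (Hev x). simpl; auto.
Qed.

Lemma compatible_le {x y} : s_le B2 x y -> s_ev B1 x -> s_ev B1 y -> s_le B1 x y.
Proof.
  destruct HB as (_ & HB2 & On1 & _ & _ & Hle). intros Hxy Hx Hy.
  destruct (sys_le_ev HB2 Hxy). apply (Hle x y). simpl; auto.
Qed.

Lemma le_sandwich {a b c d} : s_le B1 a b -> s_le B2 b c -> s_le B1 c d -> s_le B1 a d.
Proof.
  destruct HB as (HB1 & _). intros Hab Hbc Hcd.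
  destruct (sys_le_ev HB1 Hab), (sys_le_ev HB1 Hcd).
  eauto using sys_le_trans, compatible_le.
Qed.

Lemma glue_le_l x y : s_le (glue B1 B2) x y -> s_ev B1 x -> s_ev B1 y -> s_le B1 x y.
Proof.
  destruct HB as (HB1 & _). intros Hxy Hx Hy.
  destruct Hxy as [H | [H | [[c [H H']] | [c [H H']]]]].
  - exact H.
  - exact (compatible_le H Hx Hy).
  - destruct (sys_le_ev HB1 H). eauto using sys_le_trans, compatible_le.
  - destruct (sys_le_ev HB1 H'). eauto using sys_le_trans, compatible_le.
Qed.

Lemma glue_restrict_l (S : CH -> Prop) :
  (forall c, S c -> K1 c) -> sys_eq (restrict chan (glue B1 B2) S) (restrict chan B1 S).
Proof.
  destruct HB as (HB1 & HB2 & _). intros HS.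
  assert (Hev : forall x, s_ev (glue B1 B2) x -> S (chan x) -> s_ev B1 x).
  { intros x [Hx | Hx] HSx; auto using compatible_ev. }
  split; simpl.
  - intros e; split; [intros [He HSe] | tauto]; auto.
  - intros x y; split; [intros [Hxy [HSx HSy]] | tauto].
    destruct (glue_le_ev HB1 HB2 Hxy). auto using glue_le_l.
Qed.
End OneSide.

Section BothSides.
Variables (K1 K2 : CH -> Prop) (B1 B2 : sys E).
Hypothesis HB : compatible K1 K2 B1 B2.

Lemma glue_le_r x y : s_le (glue B1 B2) x y -> s_ev B2 x -> s_ev B2 y -> s_le B2 x y.
Proof. intros Hxy. apply (glue_le_l (compatible_sym HB)), glue_le_comm, Hxy. Qed.

Lemma glue_le_trans x y z :
  s_le (glue B1 B2) x y -> s_le (glue B1 B2) y z -> s_le (glue B1 B2) x z.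
Proof.
  pose proof HB as (HB1 & HB2 & _).
  assert (T1 : forall a b c, s_le B1 a b -> s_le B1 b c -> s_le B1 a c)
    by (intros; eapply sys_le_trans; eassumption).
  assert (T2 : forall a b c, s_le B2 a b -> s_le B2 b c -> s_le B2 a c)
    by (intros; eapply sys_le_trans; eassumption).
  assert (S1 : forall a b c d, s_le B1 a b -> s_le B2 b c -> s_le B1 c d -> s_le B1 a d)
    by (intros; eapply le_sandwich; eassumption).
  assert (S2 : forall a b c d, s_le B2 a b -> s_le B1 b c -> s_le B2 c d -> s_le B2 a d)
    by (intros; eapply (le_sandwich (compatible_sym HB)); eassumption).
  simpl; intros [H | [H | [[c [H H']] | [c [H H']]]]] [K | [K | [[d [K K']] | [d [K K']]]]];
  solve [ left; eauto | right; left; eauto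
        | right; right; left; solve [exists y; eauto | exists c; eauto | exists d; eauto]
        | right; right; right; solve [exists y; eauto | exists c; eauto | exists d; eauto] ].
Qed.

(* A cycle through both sides collapses: it must pass twice through the common part. *)
Lemma glue_le_cycle x y :
  s_le (glue B1 B2) x y -> s_le (glue B1 B2) y x -> s_ev B1 x -> s_ev B1 y.
Proof.
  destruct HB as (HB1 & HB2 & _). intros Hxy Hyx Hx1.
  destruct (classic (s_ev B1 y)) as [Hy1 | Hy1]; [exact Hy1 | exfalso].
  assert (Hy2 : s_ev B2 y) by (destruct (glue_le_ev HB1 HB2 Hxy) as [_ [Hy | Hy]]; tauto).
  destruct (classic (s_ev B2 x)) as [Hx2 | Hx2].
  { apply Hy1. rewrite <- (sys_le_anti HB2 (glue_le_r Hxy Hx2 Hy2) (glue_le_r Hyx Hy2 Hx2)).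
    exact Hx1. }
  destruct Hxy as [H | [H | [[c [Hxc Hcy]] | [c [H _]]]]];
  try solve [destruct (sys_le_ev HB1 H); tauto | destruct (sys_le_ev HB2 H); tauto].
  destruct Hyx as [H | [H | [[d [H _]] | [d [Hyd Hdx]]]]];
  try solve [destruct (sys_le_ev HB1 H); tauto | destruct (sys_le_ev HB2 H); tauto].
  destruct (sys_le_ev HB1 Hxc) as [_ Hc1], (sys_le_ev HB1 Hdx) as [Hd1 _].
  assert (Hcd : s_le B1 c d)
    by exact (compatible_le HB (sys_le_trans HB2 Hcy Hyd) Hc1 Hd1).
  assert (c = d) as <- by exact (sys_le_anti HB1 Hcd (sys_le_trans HB1 Hdx Hxc)).
  apply Hy1. rewrite (sys_le_anti HB2 Hyd Hcy). exact Hc1.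
Qed.

Lemma glue_le_anti x y : s_le (glue B1 B2) x y -> s_le (glue B1 B2) y x -> x = y.
Proof.
  pose proof HB as (HB1 & HB2 & _). intros Hxy Hyx.
  destruct (classic (s_ev B1 x)) as [Hx1 | Hx1].
  - pose proof (glue_le_cycle Hxy Hyx Hx1) as Hy1.
    exact (sys_le_anti HB1 (glue_le_l HB Hxy Hx1 Hy1) (glue_le_l HB Hyx Hy1 Hx1)).
  - assert (Hy1 : ~ s_ev B1 y) by (intros Hy1; exact (Hx1 (glue_le_cycle Hyx Hxy Hy1))).
    destruct (glue_le_ev HB1 HB2 Hxy) as [[Hx | Hx] [Hy | Hy]]; try tauto.
    exact (sys_le_anti HB2 (glue_le_r Hxy Hx Hy) (glue_le_r Hyx Hy Hx)).
Qed.

Lemma glue_is_sys : is_sys (glue B1 B2).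
Proof.
  destruct HB as (HB1 & HB2 & _).
  split; [| split; [| split; [| split]]].
  - intros x y; apply glue_le_ev; assumption.
  - intros x [Hx | Hx]; [left | right; left]; apply sys_le_refl; assumption.
  - exact glue_le_anti.
  - exact glue_le_trans.
  - intros e _; apply glue_fin_preds; assumption.
Qed.

Lemma glue_restrict_r (S : CH -> Prop) :
  (forall c, S c -> K2 c) -> sys_eq (restrict chan (glue B1 B2) S) (restrict chan B2 S).
Proof. intros HS. rewrite glue_comm. exact (glue_restrict_l (compatible_sym HB) _ HS). Qed.
End BothSides.
End Compatible.

Section Cut.
Variables (LO CH D : Type) (F1 F2 : frame LO CH D) (L0 : LO -> Prop).
Hypothesis Hsh : shared F1 F2 L0.

Local Notation LC := (setU (LEFT0 F1 L0) (Ccut0 F1 L0)).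
Local Notation RC := (setU (RIGHT2 F2 L0) (Ccut0 F1 L0)).

Lemma left_right_disjoint c : LEFT0 F1 L0 c -> RIGHT2 F2 L0 c -> False.
Proof.
  intros [Hc [a [b [Hab [Ha Hb]]]]] [_ Hright].
  destruct (Hsh Ha) as (_ & _ & _ & Hends & _).
  rewrite (Hends c) in Hab by (split; eauto 6).
  destruct (Hright _ _ Hab); tauto.
Qed.

Lemma left_right_common c : LC c /\ RC c <-> Ccut0 F1 L0 c.
Proof.
  pose proof (@left_right_disjoint c). unfold setU; tauto.
Qed.

Lemma chans_shared_left l : L0 l -> forall c, chans F2 l c -> LC c.
Proof.
  intros Hl c Hc. destruct (Hsh Hl) as (_ & _ & Hchans & _).
  apply Hchans in Hc. destruct Hc as [Hc [a [b [Hab Hend]]]].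
  destruct Hend as [-> | ->]; [destruct (classic (L0 b)) | destruct (classic (L0 a))].
  - left; split; eauto 7.
  - right; split; [exact Hc | exists l, b; tauto].
  - left; split; eauto 7.
  - right; split; [exact Hc | exists a, l; tauto].
Qed.

(* A channel of [F2] with an endpoint outside [L0] either avoids [L0] or is a cut channel;
   in the latter case its other endpoint is shared, so [F1] has it with the same endpoints. *)
Lemma chans_unshared_right l : ~ L0 l -> forall c, chans F2 l c -> RC c.
Proof.
  intros Hl c [Hc [a [b [Hab Hend]]]].
  assert (Hshared : forall o, L0 o -> chans F2 o c -> f_chan F1 c /\ f_ends F1 c = f_ends F2 c).
  { intros o Ho Hoc. destruct (Hsh Ho) as (_ & _ & Hchans & Hends & _).
    apply Hchans in Hoc. split; [apply Hoc | apply Hends, Hoc]. }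
  destruct Hend as [-> | ->]; [destruct (classic (L0 b)) as [Hb | Hb]
                              | destruct (classic (L0 a)) as [Ha | Ha]].
  - destruct (Hshared b Hb) as [Hc1 Hends]; [split; eauto 7 |].
    right; split; [exact Hc1 | exists l, b; rewrite Hends; tauto].
  - left; split; [exact Hc |]. intros a' b' Hab'. rewrite Hab in Hab'.
    injection Hab' as <- <-. tauto.
  - destruct (Hshared a Ha) as [Hc1 Hends]; [split; eauto 7 |].
    right; split; [exact Hc1 | exists a, l; rewrite Hends; tauto].
  - left; split; [exact Hc |]. intros a' b' Hab'. rewrite Hab in Hab'.
    injection Hab' as <- <-. tauto.
Qed.

Variables (E : Type) (chan : E -> CH) (msg : E -> D) (A1 A2 : sys E).

Lemma cut_compatible :
  is_sys A1 -> is_sys A2 ->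
  sys_eq (restrict chan (restrict chan A1 LC) (Ccut0 F1 L0))
         (restrict chan (restrict chan A2 RC) (Ccut0 F1 L0)) ->
  compatible chan LC RC (restrict chan A1 LC) (restrict chan A2 RC).
Proof.
  intros HA1 HA2 Hcut.
  split; [exact (is_sys_restrict chan LC HA1) |].
  split; [exact (is_sys_restrict chan RC HA2) |].
  split; [intros e [_ He]; exact He |].
  split; [intros e [_ He]; exact He |].
  rewrite !restrict_restrict in *.
  transitivity (restrict chan A1 (fun c => LC c /\ Ccut0 F1 L0 c)).
  { apply restrict_proper; [reflexivity | intros c]. rewrite <- left_right_common. tauto. }
  rewrite Hcut. apply restrict_proper; [reflexivity | intros c].
  rewrite <- left_right_common. tauto.
Qed.

(* Locations of [L0] only see left channels and behave as in [F1]; the others only see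
   right channels and behave as in [F2]. *)
Lemma glue_is_exec :
  is_exec chan msg F1 A1 -> is_exec chan msg F2 A2 ->
  compatible chan LC RC (restrict chan A1 LC) (restrict chan A2 RC) ->
  is_exec chan msg F2 (glue (restrict chan A1 LC) (restrict chan A2 RC)).
Proof.
  intros [_ X1] [_ X2] HB. split; [exact (glue_is_sys HB) |]. intros l Hl.
  destruct (classic (L0 l)) as [H0 | H0].
  - destruct (Hsh H0) as (Hl1 & _ & Hchans & _ & Htraces).
    destruct (X1 l Hl1) as [s [Hs Ht]]. exists s; split; [| apply Htraces, Ht].
    apply (enumerates_restrict (chan := chan) (B := A1) (C := chans F1 l)); [| exact Hs].
    symmetry. rewrite (glue_restrict_l HB _ (chans_shared_left H0)), restrict_restrict.
    apply restrict_proper; [reflexivity | intros c].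
    rewrite Hchans. pose proof (chans_shared_left H0 (c := c)). tauto.
  - destruct (X2 l Hl) as [s [Hs Ht]]. exists s; split; [| exact Ht].
    apply (enumerates_restrict (chan := chan) (B := A2) (C := chans F2 l)); [| exact Hs].
    symmetry. rewrite (glue_restrict_r HB _ (chans_unshared_right H0)), restrict_restrict.
    apply restrict_proper; [reflexivity | intros c].
    pose proof (chans_unshared_right H0 (c := c)). tauto.
Qed.
End Cut.

Theorem lemma11 (LO CH D E : Type) (chan : E -> CH) (msg : E -> D)
  (F1 F2 : frame LO CH D) (L0 : LO -> Prop) :
  shared F1 F2 L0 ->
  forall Blc Brc : sys E,
  in_lruns chan msg (setU (LEFT0 F1 L0) (Ccut0 F1 L0)) F1 Blc ->
  in_lruns chan msg (setU (RIGHT2 F2 L0) (Ccut0 F1 L0)) F2 Brc ->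
  sys_eq (restrict chan Blc (Ccut0 F1 L0)) (restrict chan Brc (Ccut0 F1 L0)) ->
  exists A : sys E, is_exec chan msg F2 A /\
    sys_eq Blc (restrict chan A (setU (LEFT0 F1 L0) (Ccut0 F1 L0))) /\
    sys_eq Brc (restrict chan A (setU (RIGHT2 F2 L0) (Ccut0 F1 L0))).
Proof.
  intros Hsh Blc Brc [A1 [X1 E1]] [A2 [X2 E2]] Hcut.
  set (LC := setU (LEFT0 F1 L0) (Ccut0 F1 L0)) in *.
  set (RC := setU (RIGHT2 F2 L0) (Ccut0 F1 L0)) in *.
  assert (HB : compatible chan LC RC (restrict chan A1 LC) (restrict chan A2 RC)).
  { apply (cut_compatible Hsh); [apply X1 | apply X2 |].
    fold LC RC. rewrite <- E1, <- E2. exact Hcut. }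
  exists (glue (restrict chan A1 LC) (restrict chan A2 RC)).
  split; [exact (glue_is_exec Hsh X1 X2 HB) | split].
  - rewrite E1, (glue_restrict_l HB _ (fun c Hc => Hc)), restrict_restrict.
    apply restrict_proper; [reflexivity | intros c; tauto].
  - rewrite E2, (glue_restrict_r HB _ (fun c Hc => Hc)), restrict_restrict.
    apply restrict_proper; [reflexivity | intros c; tauto].
Qed.
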